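(* Let $a,b,\alpha,\beta$ be constants with $\alpha>0$, $\beta>0$, $\alpha\neq\beta$, $a^2\alpha^2+b^2\beta^2=1$, and let $c(v)=(a\cos\alpha v,\ a\sin\alpha v,\ b\cos\beta v,\ b\sin\beta v)$, $v\in[0,2\pi)$ (an arc-length parameterized curve in $\mathbb R^4$ with constant curvatures). Put $$\varkappa=\sqrt{a^2\alpha^4+b^2\beta^4},\qquad \tau=\frac{ab\alpha\beta(\alpha^2-\beta^2)}{\varkappa},\qquad \sigma=\frac{\alpha\beta}{\varkappa},$$ $$n(v)=\tfrac1\varkappa(-a\alpha^2\cos\alpha v,-a\alpha^2\sin\alpha v,-b\beta^2\cos\beta v,-b\beta^2\sin\beta v),\quad b_1(v)=\tfrac1\varkappa(b\beta^2\cos\alpha v,b\beta^2\sin\alpha v,-a\alpha^2\cos\beta v,-a\alpha^2\sin\beta v)$$ (the second and fourth Frenet vectors of $c$). Let $A(u),B(u)$ be smooth functions on an interval $J$ with $A'^2+B'^2>0$ and $(\varkappa A-1)^2+(\tau A-\sigma B)^2>0$ on $J$, and consider the surface $$M^2: z(u,v)=c(v)+A(u)\,n(v)+B(u)\,b_1(v),\qquad u\in J,\ v\in[0,2\pi).$$ Then $M^2$ is minimal if and only if, on $J$, $$\frac{A''B'-A'B''}{A'^2+B'^2}=\frac{(\varkappa A-1)\varkappa B'+(\tau A-\sigma B)(\sigma A'+\tau B')}{(\varkappa A-1)^2+(\tau A-\sigma B)^2}.$$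
   Context: Minimal means that the mean curvature vector $H=\tfrac12(\sigma_{II}(x,x)+\sigma_{II}(y,y))$ vanishes, where $\sigma_{II}$ is the second fundamental form of the surface in $\mathbb R^4$ (with its standard Euclidean metric) and $x,y$ is an orthonormal tangent basis. *)

From Stdlib Require Import Reals.
Open Scope R_scope.

Record R4 := mkR4 { x1 : R; x2 : R; x3 : R; x4 : R }.

Definition vzero : R4 := mkR4 0 0 0 0.
Definition vadd (p q : R4) : R4 :=
  mkR4 (x1 p + x1 q) (x2 p + x2 q) (x3 p + x3 q) (x4 p + x4 q).
Definition vscale (k : R) (p : R4) : R4 :=
  mkR4 (k * x1 p) (k * x2 p) (k * x3 p) (k * x4 p).
Definition vsub (p q : R4) : R4 := vadd p (vscale (-1) q).
Definition dot (p q : R4) : R :=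
  x1 p * x1 q + x2 p * x2 q + x3 p * x3 q + x4 p * x4 q.

Definition has_pd_u (X Xu : R -> R -> R4) (u v : R) : Prop :=
  derivable_pt_lim (fun s => x1 (X s v)) u (x1 (Xu u v)) /\
  derivable_pt_lim (fun s => x2 (X s v)) u (x2 (Xu u v)) /\
  derivable_pt_lim (fun s => x3 (X s v)) u (x3 (Xu u v)) /\
  derivable_pt_lim (fun s => x4 (X s v)) u (x4 (Xu u v)).

Definition has_pd_v (X Xv : R -> R -> R4) (u v : R) : Prop :=
  derivable_pt_lim (fun s => x1 (X u s)) v (x1 (Xv u v)) /\
  derivable_pt_lim (fun s => x2 (X u s)) v (x2 (Xv u v)) /\
  derivable_pt_lim (fun s => x3 (X u s)) v (x3 (Xv u v)) /\
  derivable_pt_lim (fun s => x4 (X u s)) v (x4 (Xv u v)).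

Definition lin_indep (xu xv : R4) : Prop :=
  forall p q : R, vadd (vscale p xu) (vscale q xv) = vzero -> p = 0 /\ q = 0.

(* Orthonormal tangent basis x, y (Gram-Schmidt on X_u, X_v), given both as
   vectors in R^4 and by coordinates w.r.t. (X_u, X_v):
     x = e1x * X_u,   y = e2u * X_u + e2v * X_v. *)
Definition e1x (xu : R4) : R := / sqrt (dot xu xu).
Definition e1vec (xu : R4) : R4 := vscale (e1x xu) xu.
Definition w2vec (xu xv : R4) : R4 :=
  vsub xv (vscale (dot xv (e1vec xu)) (e1vec xu)).
Definition e2v (xu xv : R4) : R := / sqrt (dot (w2vec xu xv) (w2vec xu xv)).
Definition e2u (xu xv : R4) : R := - (dot xv (e1vec xu)) * e1x xu * e2v xu xv.
Definition e2vec (xu xv : R4) : R4 := vscale (e2v xu xv) (w2vec xu xv).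

Definition normal_part (xu xv w : R4) : R4 :=
  vsub (vsub w (vscale (dot w (e1vec xu)) (e1vec xu)))
       (vscale (dot w (e2vec xu xv)) (e2vec xu xv)).

(* Second fundamental form sigma_II(X, Y) for tangent vectors
   X = p X_u + q X_v, Y = r X_u + s X_v : normal part of the second
   derivative D_X Y = p r X_uu + (p s + q r) X_uv + q s X_vv. *)
Definition sff (xu xv xuu xuv xvv : R4) (p q r s : R) : R4 :=
  normal_part xu xv
    (vadd (vadd (vscale (p * r) xuu) (vscale (p * s + q * r) xuv))
          (vscale (q * s) xvv)).

Definition mean_curv (xu xv xuu xuv xvv : R4) : R4 :=
  vscale (1/2)
    (vadd (sff xu xv xuu xuv xvv (e1x xu) 0 (e1x xu) 0)
          (sff xu xv xuu xuv xvv (e2u xu xv) (e2v xu xv)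
                                 (e2u xu xv) (e2v xu xv))).

Definition minimal_on (X : R -> R -> R4) (U : R -> R -> Prop) : Prop :=
  exists Xu Xv Xuu Xuv Xvv : R -> R -> R4,
    forall u v, U u v ->
      has_pd_u X Xu u v /\ has_pd_v X Xv u v /\
      has_pd_u Xu Xuu u v /\ has_pd_v Xu Xuv u v /\ has_pd_v Xv Xvv u v /\
      lin_indep (Xu u v) (Xv u v) /\
      mean_curv (Xu u v) (Xv u v) (Xuu u v) (Xuv u v) (Xvv u v) = vzero.

Definition smooth_on (l r : R) (f : R -> R) (D : nat -> R -> R) : Prop :=
  (forall x, D 0%nat x = f x) /\
  (forall (k : nat) x, l < x < r -> derivable_pt_lim (D k) x (D (S k) x)).

Definition kap (a b al be : R) : R :=
  sqrt (a ^ 2 * al ^ 4 + b ^ 2 * be ^ 4).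
Definition tau_c (a b al be : R) : R :=
  a * b * al * be * (al ^ 2 - be ^ 2) / kap a b al be.
Definition sig_c (a b al be : R) : R := al * be / kap a b al be.

Definition curve_c (a b al be v : R) : R4 :=
  mkR4 (a * cos (al * v)) (a * sin (al * v)) (b * cos (be * v)) (b * sin (be * v)).

Definition frenet_n (a b al be v : R) : R4 :=
  vscale (/ kap a b al be)
    (mkR4 (- a * al ^ 2 * cos (al * v)) (- a * al ^ 2 * sin (al * v))
          (- b * be ^ 2 * cos (be * v)) (- b * be ^ 2 * sin (be * v))).

Definition frenet_b1 (a b al be v : R) : R4 :=
  vscale (/ kap a b al be)
    (mkR4 (b * be ^ 2 * cos (al * v)) (b * be ^ 2 * sin (al * v))
          (- a * al ^ 2 * cos (be * v)) (- a * al ^ 2 * sin (be * v))).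

Definition surf_z (a b al be : R) (A B : R -> R) (u v : R) : R4 :=
  vadd (vadd (curve_c a b al be v) (vscale (A u) (frenet_n a b al be v)))
       (vscale (B u) (frenet_b1 a b al be v)).

(* The Frenet frame (t, n, b, b1) of c is orthonormal, so for each v
   the map "frame coordinates -> R^4" is a linear isometry, and the mean
   curvature vector commutes with linear isometries.  In frame coordinates
   the surface is constant in v, and the Frenet equations turn every
   v-derivative into multiplication by the constant Frenet matrix.  Hence
   z_u = (0, A', 0, B') and z_v = (1 - kappa A, 0, tau A - sigma B, 0) are
   orthogonal, and the mean curvature vector is an explicit multiple of
   (0, -B', 0, A'); it vanishes exactly when the stated ODE holds. *)

From Stdlib Require Import Reals Lra Nsatz.
From Coquelicot Require Import Coquelicot.
Open Scope R_scope.

Lemma R4_ext (p q : R4) :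
  x1 p = x1 q -> x2 p = x2 q -> x3 p = x3 q -> x4 p = x4 q -> p = q.
Proof. destruct p, q; cbn; intros -> -> -> ->; reflexivity. Qed.

Lemma dot_self_eq0 (c : R4) : dot c c = 0 -> c = vzero.
Proof.
  destruct c as [c1 c2 c3 c4]; unfold dot; cbn; intros H.
  apply R4_ext; cbn; nra.
Qed.

Record lin_isometry (f : R4 -> R4) : Prop := {
  iso_add : forall p q, f (vadd p q) = vadd (f p) (f q);
  iso_scale : forall k p, f (vscale k p) = vscale k (f p);
  iso_dot : forall p q, dot (f p) (f q) = dot p q }.

Section LinearIsometry.

Variable f : R4 -> R4.
Hypothesis Hf : lin_isometry f.

Lemma iso_sub (p q : R4) : f (vsub p q) = vsub (f p) (f q).
Proof. unfold vsub; rewrite (iso_add _ Hf), (iso_scale _ Hf); reflexivity. Qed.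

Lemma iso_eq_zero (c : R4) : f c = vzero <-> c = vzero.
Proof.
  split; intros Hc.
  - apply dot_self_eq0; rewrite <- (iso_dot _ Hf), Hc; unfold dot; cbn; ring.
  - replace c with (vscale 0 c) by (rewrite Hc; apply R4_ext; cbn; ring).
    rewrite (iso_scale _ Hf); apply R4_ext; cbn; ring.
Qed.

Lemma lin_indep_iso (xu xv : R4) : lin_indep xu xv -> lin_indep (f xu) (f xv).
Proof.
  intros Hind p q Hpq; apply Hind, iso_eq_zero.
  rewrite (iso_add _ Hf), !(iso_scale _ Hf); exact Hpq.
Qed.

(* The Gram-Schmidt basis, the normal projection, the second fundamental
   form and hence the mean curvature vector are all built from the linear
   operations and inner products, so they are transported by [f]. *)
Lemma mean_curv_iso (xu xv xuu xuv xvv : R4) :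
  mean_curv (f xu) (f xv) (f xuu) (f xuv) (f xvv) = f (mean_curv xu xv xuu xuv xvv).
Proof.
  assert (E1 : forall c, e1x (f c) = e1x c).
  { intros; unfold e1x; rewrite (iso_dot _ Hf); reflexivity. }
  assert (E2 : forall c, e1vec (f c) = f (e1vec c)).
  { intros; unfold e1vec; rewrite E1, (iso_scale _ Hf); reflexivity. }
  assert (E3 : forall c d, w2vec (f c) (f d) = f (w2vec c d)).
  { intros; unfold w2vec; rewrite E2, (iso_dot _ Hf), <- (iso_scale _ Hf), iso_sub;
    reflexivity. }
  assert (E4 : forall c d, e2v (f c) (f d) = e2v c d).
  { intros; unfold e2v; rewrite E3, (iso_dot _ Hf); reflexivity. }
  assert (E5 : forall c d, e2u (f c) (f d) = e2u c d).
  { intros; unfold e2u; rewrite E4, E2, E1, (iso_dot _ Hf); reflexivity. }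
  assert (E6 : forall c d, e2vec (f c) (f d) = f (e2vec c d)).
  { intros; unfold e2vec; rewrite E4, E3, (iso_scale _ Hf); reflexivity. }
  assert (E7 : forall c d w, normal_part (f c) (f d) (f w) = f (normal_part c d w)).
  { intros; unfold normal_part;
    rewrite E6, E2, !(iso_dot _ Hf), <- !(iso_scale _ Hf), !iso_sub; reflexivity. }
  assert (E8 : forall p q r s, sff (f xu) (f xv) (f xuu) (f xuv) (f xvv) p q r s
                            = f (sff xu xv xuu xuv xvv p q r s)).
  { intros; unfold sff; rewrite <- !(iso_scale _ Hf), <- !(iso_add _ Hf), E7;
    reflexivity. }
  unfold mean_curv; rewrite E1, E4, E5, !E8, <- (iso_add _ Hf), (iso_scale _ Hf).
  reflexivity.
Qed.

End LinearIsometry.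

Definition frame_comb (e1 e2 e3 e4 c : R4) : R4 :=
  vadd (vadd (vadd (vscale (x1 c) e1) (vscale (x2 c) e2)) (vscale (x3 c) e3))
       (vscale (x4 c) e4).

Definition orthonormal4 (e1 e2 e3 e4 : R4) : Prop :=
  dot e1 e1 = 1 /\ dot e2 e2 = 1 /\ dot e3 e3 = 1 /\ dot e4 e4 = 1 /\
  dot e1 e2 = 0 /\ dot e1 e3 = 0 /\ dot e1 e4 = 0 /\
  dot e2 e3 = 0 /\ dot e2 e4 = 0 /\ dot e3 e4 = 0.

Lemma frame_comb_isometry (e1 e2 e3 e4 : R4) :
  orthonormal4 e1 e2 e3 e4 -> lin_isometry (frame_comb e1 e2 e3 e4).
Proof.
  intros (h11 & h22 & h33 & h44 & h12 & h13 & h14 & h23 & h24 & h34).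
  split.
  - intros; apply R4_ext; unfold frame_comb; cbn; ring.
  - intros; apply R4_ext; unfold frame_comb; cbn; ring.
  - intros c d.
    assert (bilinear : dot (frame_comb e1 e2 e3 e4 c) (frame_comb e1 e2 e3 e4 d)
      = x1 c * x1 d * dot e1 e1 + x2 c * x2 d * dot e2 e2
      + x3 c * x3 d * dot e3 e3 + x4 c * x4 d * dot e4 e4
      + (x1 c * x2 d + x2 c * x1 d) * dot e1 e2 + (x1 c * x3 d + x3 c * x1 d) * dot e1 e3
      + (x1 c * x4 d + x4 c * x1 d) * dot e1 e4 + (x2 c * x3 d + x3 c * x2 d) * dot e2 e3
      + (x2 c * x4 d + x4 c * x2 d) * dot e2 e4 + (x3 c * x4 d + x4 c * x3 d) * dot e3 e4)
      by (unfold frame_comb, dot; cbn; ring).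
    rewrite bilinear, h11, h22, h33, h44, h12, h13, h14, h23, h24, h34.
    unfold dot; ring.
Qed.

Definition has_vderiv (g : R -> R4) (x : R) (L : R4) : Prop :=
  derivable_pt_lim (fun s => x1 (g s)) x (x1 L) /\
  derivable_pt_lim (fun s => x2 (g s)) x (x2 L) /\
  derivable_pt_lim (fun s => x3 (g s)) x (x3 L) /\
  derivable_pt_lim (fun s => x4 (g s)) x (x4 L).

Lemma has_pd_u_vderiv (X Y : R -> R -> R4) (u v : R) :
  has_vderiv (fun s => X s v) u (Y u v) -> has_pd_u X Y u v.
Proof. exact (fun H => H). Qed.

Lemma has_pd_v_vderiv (X Y : R -> R -> R4) (u v : R) :
  has_vderiv (fun s => X u s) v (Y u v) -> has_pd_v X Y u v.
Proof. exact (fun H => H). Qed.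

Lemma has_vderiv_ext (g h : R -> R4) (x : R) (L : R4) :
  (forall s, g s = h s) -> has_vderiv h x L -> has_vderiv g x L.
Proof.
  intros E (d1 & d2 & d3 & d4);
    repeat split; eapply derivable_pt_lim_ext; try eassumption; intros; rewrite E; auto.
Qed.

Lemma has_vderiv_locally_ext (g h : R -> R4) (l r x : R) (L : R4) :
  l < x < r -> (forall s, l < s < r -> g s = h s) -> has_vderiv h x L ->
  has_vderiv g x L.
Proof.
  intros hx E (d1 & d2 & d3 & d4); repeat split;
    (eapply derivable_pt_lim_locally_ext; [exact hx | | eassumption]);
    intros s hs; rewrite E; auto.
Qed.

Lemma has_vderiv_unique (g : R -> R4) (x : R) (L1 L2 : R4) :
  has_vderiv g x L1 -> has_vderiv g x L2 -> L1 = L2.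
Proof.
  intros (a1 & a2 & a3 & a4) (b1 & b2 & b3 & b4).
  apply R4_ext; eapply uniqueness_limite; eassumption.
Qed.

Lemma has_vderiv_frame_comb (e1 e2 e3 e4 : R4) (Z : R -> R4) (x : R) (Z' : R4) :
  has_vderiv Z x Z' ->
  has_vderiv (fun s => frame_comb e1 e2 e3 e4 (Z s)) x (frame_comb e1 e2 e3 e4 Z').
Proof.
  intros (d1 & d2 & d3 & d4); unfold has_vderiv, frame_comb; cbn;
    repeat split; repeat apply derivable_pt_lim_plus;
    apply derivable_pt_lim_scal_right; assumption.
Qed.

(* On a strip l < u < r the existential [minimal_on] can be tested on any
   explicit family of partial derivatives: derivatives are unique, and the
   strip is open in u and contains every v. *)
Lemma minimal_on_strip (X Xu Xv Xuu Xuv Xvv : R -> R -> R4) (l r : R) :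
  (forall u v, l < u < r ->
     has_pd_u X Xu u v /\ has_pd_v X Xv u v /\ has_pd_u Xu Xuu u v /\
     has_pd_v Xu Xuv u v /\ has_pd_v Xv Xvv u v) ->
  minimal_on X (fun u v => l < u < r) <->
  (forall u v, l < u < r ->
     lin_indep (Xu u v) (Xv u v) /\
     mean_curv (Xu u v) (Xv u v) (Xuu u v) (Xuv u v) (Xvv u v) = vzero).
Proof.
  intros HX; split.
  - intros (Yu & Yv & Yuu & Yuv & Yvv & HY) u v hu.
    assert (eu : forall s w, l < s < r -> Yu s w = Xu s w).
    { intros s w hs; eapply has_vderiv_unique; [apply (HY s w hs) | apply (HX s w hs)]. }
    assert (ev : forall w, Yv u w = Xv u w).
    { intros w; eapply has_vderiv_unique; [apply (HY u w hu) | apply (HX u w hu)]. }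
    destruct (HY u v hu) as (_ & _ & huu & huv & hvv & hind & hmean).
    destruct (HX u v hu) as (_ & _ & guu & guv & gvv).
    assert (euu : Yuu u v = Xuu u v).
    { eapply has_vderiv_unique; [exact huu |].
      eapply has_vderiv_locally_ext; [exact hu | | exact guu]; auto. }
    assert (euv : Yuv u v = Xuv u v).
    { eapply has_vderiv_unique; [exact huv |].
      eapply has_vderiv_ext; [| exact guv]; auto. }
    assert (evv : Yvv u v = Xvv u v).
    { eapply has_vderiv_unique; [exact hvv |].
      eapply has_vderiv_ext; [| exact gvv]; auto. }
    rewrite eu, ev, euu, euv, evv in *; auto.
  - intros Hpt; exists Xu, Xv, Xuu, Xuv, Xvv; intros u v hu.
    destruct (HX u v hu) as (? & ? & ? & ? & ?); destruct (Hpt u v hu); tauto.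
Qed.

Lemma mean_curv_coords (p q P Q a1 a2 c1 c2 : R) (m : R4) :
  0 < p ^ 2 + q ^ 2 -> 0 < P ^ 2 + Q ^ 2 ->
  mean_curv (mkR4 0 p 0 q) (mkR4 P 0 Q 0) (mkR4 0 a1 0 a2) m (mkR4 0 c1 0 c2)
  = vscale (/ (2 * (p ^ 2 + q ^ 2)) *
            ((p * a2 - q * a1) / (p ^ 2 + q ^ 2) + (p * c2 - q * c1) / (P ^ 2 + Q ^ 2)))
           (mkR4 0 (- q) 0 p).
Proof.
  intros hE hG.
  set (xu := mkR4 0 p 0 q); set (xv := mkR4 P 0 Q 0).
  set (i := / sqrt (p ^ 2 + q ^ 2)); set (j := / sqrt (P ^ 2 + Q ^ 2)).
  assert (hi : / (p ^ 2 + q ^ 2) = i * i).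
  { unfold i; rewrite <- Rinv_mult, sqrt_sqrt; lra. }
  assert (hj : / (P ^ 2 + Q ^ 2) = j * j).
  { unfold j; rewrite <- Rinv_mult, sqrt_sqrt; lra. }
  assert (hi1 : i * i * (p * p + q * q) = 1) by (rewrite <- hi; field; lra).
  assert (F1 : e1x xu = i) by (unfold e1x, dot, i; cbn; f_equal; f_equal; ring).
  assert (F2 : e1vec xu = mkR4 0 (i * p) 0 (i * q)).
  { unfold e1vec; rewrite F1; apply R4_ext; cbn; ring. }
  assert (F3 : w2vec xu xv = xv).
  { unfold w2vec; rewrite F2; apply R4_ext; unfold dot; cbn; ring. }
  assert (F4 : e2v xu xv = j) by (unfold e2v, j; rewrite F3; unfold dot; cbn; do 2 f_equal; ring).
  assert (F5 : e2u xu xv = 0) by (unfold e2u; rewrite F2; unfold dot; cbn; ring).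
  assert (F6 : e2vec xu xv = mkR4 (j * P) 0 (j * Q) 0).
  { unfold e2vec; rewrite F4, F3; apply R4_ext; cbn; ring. }
  unfold mean_curv, sff, normal_part; rewrite F1, F2, F4, F5, F6.
  unfold Rdiv; rewrite Rinv_mult, hi, hj; clearbody i j; clear - hi1.
  apply R4_ext; unfold dot; cbn; [ring | nsatz | ring | nsatz].
Qed.

Lemma mean_curv_coords_zero (p q P Q a1 a2 c1 c2 : R) (m : R4) :
  0 < p ^ 2 + q ^ 2 -> 0 < P ^ 2 + Q ^ 2 ->
  mean_curv (mkR4 0 p 0 q) (mkR4 P 0 Q 0) (mkR4 0 a1 0 a2) m (mkR4 0 c1 0 c2) = vzero
  <-> (p * a2 - q * a1) / (p ^ 2 + q ^ 2) + (p * c2 - q * c1) / (P ^ 2 + Q ^ 2) = 0.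
Proof.
  intros hE hG; rewrite mean_curv_coords by assumption.
  set (W := _ / _ + _ / _); set (k := / (2 * (p ^ 2 + q ^ 2)) * W).
  assert (hk : / (2 * (p ^ 2 + q ^ 2)) > 0) by (apply Rinv_0_lt_compat; lra).
  split; intros H.
  - assert (Hq : k * q = 0) by (apply (f_equal x2) in H; cbn in H; nra).
    assert (Hp : k * p = 0) by (apply (f_equal x4) in H; cbn in H; nra).
    assert (Hk : k * (p ^ 2 + q ^ 2) = 0)
      by (replace (k * _) with ((k * p) * p + (k * q) * q) by ring; rewrite Hp, Hq; ring).
    destruct (Rmult_integral _ _ Hk) as [Hk0 | ]; [| lra].
    destruct (Rmult_integral _ _ Hk0); lra.
  - unfold k; rewrite H; apply R4_ext; cbn; ring.
Qed.

Lemma lin_indep_coords (p q P Q : R) :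
  0 < p ^ 2 + q ^ 2 -> 0 < P ^ 2 + Q ^ 2 -> lin_indep (mkR4 0 p 0 q) (mkR4 P 0 Q 0).
Proof.
  intros hE hG s t Hst.
  assert (z1 := f_equal x1 Hst); assert (z2 := f_equal x2 Hst);
  assert (z3 := f_equal x3 Hst); assert (z4 := f_equal x4 Hst); cbn in z1, z2, z3, z4.
  assert (Hs : s * (p ^ 2 + q ^ 2) = 0)
    by (replace (s * _) with ((s * p + t * 0) * p + (s * q + t * 0) * q) by ring;
        rewrite z2, z4; ring).
  assert (Ht : t * (P ^ 2 + Q ^ 2) = 0)
    by (replace (t * _) with ((s * 0 + t * P) * P + (s * 0 + t * Q) * Q) by ring;
        rewrite z1, z3; ring).
  apply Rmult_integral in Hs; apply Rmult_integral in Ht; lra.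
Qed.

Section FrenetFrame.

Variables a b al be : R.
Hypothesis Hab : a ^ 2 * al ^ 2 + b ^ 2 * be ^ 2 = 1.

Local Notation K := (kap a b al be).
Local Notation tau := (tau_c a b al be).
Local Notation sig := (sig_c a b al be).

Definition frenet_t (v : R) : R4 :=
  mkR4 (- a * al * sin (al * v)) (a * al * cos (al * v))
       (- b * be * sin (be * v)) (b * be * cos (be * v)).
Definition frenet_b (v : R) : R4 :=
  mkR4 (b * be * sin (al * v)) (- b * be * cos (al * v))
       (- a * al * sin (be * v)) (a * al * cos (be * v)).

Definition frenet_frame (v : R) : R4 -> R4 :=
  frame_comb (frenet_t v) (frenet_n a b al be v) (frenet_b v) (frenet_b1 a b al be v).

Definition frenet_deriv (c : R4) : R4 :=
  mkR4 (- K * x2 c) (K * x1 c - tau * x3 c) (tau * x2 c - sig * x4 c) (sig * x3 c).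

(* The curvature is positive: one of a al, b be is nonzero, and then so is
   the corresponding frequency. *)
Lemma kap_radicand_pos : 0 < a ^ 2 * al ^ 4 + b ^ 2 * be ^ 4.
Proof.
  assert (Ha : 0 <= (a * al) ^ 2 * al ^ 2) by (apply Rmult_le_pos; apply pow2_ge_0).
  assert (Hb : 0 <= (b * be) ^ 2 * be ^ 2) by (apply Rmult_le_pos; apply pow2_ge_0).
  destruct (Req_dec (a * al) 0) as [H0 | H0].
  - assert (Hbe : (b * be) ^ 2 = 1) by nra.
    assert (be ^ 2 > 0) by (apply pow2_gt_0; intros ->; rewrite Rmult_0_r in Hbe; lra).
    nra.
  - assert ((a * al) ^ 2 > 0) by (apply pow2_gt_0; auto).
    assert (al ^ 2 > 0) by (apply pow2_gt_0; intros ->; apply H0; ring).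
    nra.
Qed.

Lemma kap_pos : 0 < K.
Proof. apply sqrt_lt_R0, kap_radicand_pos. Qed.

Lemma kap_sq : K * K = a * a * al * al * al * al + b * b * be * be * be * be.
Proof. unfold kap; rewrite sqrt_sqrt; [ring | apply Rlt_le, kap_radicand_pos]. Qed.

Lemma kap_inv : / K * K = 1.
Proof. apply Rinv_l; pose proof kap_pos; lra. Qed.

(* Identities in a, b, al, be, K, / K, sin and cos, following from the
   normalisation [Hab] and the definition of K.  [nsatz] is given all
   relations with powers expanded into products, which it handles reliably. *)
Ltac frenet_algebra :=
  pose proof kap_sq; pose proof kap_inv;
  assert (a * a * al * al + b * b * be * be = 1) by (rewrite <- Hab; ring);
  clear Hab; unfold tau_c, sig_c, Rdiv; cbn [pow];
  generalize dependent (/ kap a b al be); generalize dependent (kap a b al be);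
  intros; nsatz.

Lemma frenet_orthonormal (v : R) :
  orthonormal4 (frenet_t v) (frenet_n a b al be v) (frenet_b v) (frenet_b1 a b al be v).
Proof.
  pose proof (sin2_cos2 (al * v)); pose proof (sin2_cos2 (be * v)); unfold Rsqr in *.
  unfold orthonormal4, dot, frenet_t, frenet_b, frenet_n, frenet_b1, vscale; cbn.
  repeat split; frenet_algebra.
Qed.

Lemma frenet_frame_isometry (v : R) : lin_isometry (frenet_frame v).
Proof. apply frame_comb_isometry, frenet_orthonormal. Qed.

Lemma frenet_equations (c : R4) (v : R) :
  has_vderiv (fun s => frenet_frame s c) v (frenet_frame v (frenet_deriv c)).
Proof.
  unfold has_vderiv, frenet_frame, frame_comb, frenet_deriv,
    frenet_t, frenet_b, frenet_n, frenet_b1, vadd, vscale; cbn.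
  repeat split; apply is_derive_Reals; auto_derive; try exact I; frenet_algebra.
Qed.

Definition surf_coords (A B : R -> R) (u : R) : R4 :=
  mkR4 0 (A u - / K) 0 (B u + a * b * (be ^ 2 - al ^ 2) / K).

Lemma surf_in_frame (A B : R -> R) (u v : R) :
  surf_z a b al be A B u v = frenet_frame v (surf_coords A B u).
Proof.
  unfold surf_z, curve_c, surf_coords, frenet_frame, frame_comb,
    frenet_t, frenet_b, frenet_n, frenet_b1, vadd, vscale.
  apply R4_ext; cbn; frenet_algebra.
Qed.

Lemma frenet_deriv_surf_coords (A B : R -> R) (u : R) :
  frenet_deriv (surf_coords A B u) = mkR4 (1 - K * A u) 0 (tau * A u - sig * B u) 0.
Proof. unfold frenet_deriv, surf_coords; apply R4_ext; cbn; frenet_algebra. Qed.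

Definition surf_zu (DA DB : nat -> R -> R) (u v : R) : R4 :=
  frenet_frame v (mkR4 0 (DA 1%nat u) 0 (DB 1%nat u)).
Definition surf_zv (A B : R -> R) (u v : R) : R4 :=
  frenet_frame v (frenet_deriv (surf_coords A B u)).
Definition surf_zuu (DA DB : nat -> R -> R) (u v : R) : R4 :=
  frenet_frame v (mkR4 0 (DA 2%nat u) 0 (DB 2%nat u)).
Definition surf_zuv (DA DB : nat -> R -> R) (u v : R) : R4 :=
  frenet_frame v (frenet_deriv (mkR4 0 (DA 1%nat u) 0 (DB 1%nat u))).
Definition surf_zvv (A B : R -> R) (u v : R) : R4 :=
  frenet_frame v (frenet_deriv (frenet_deriv (surf_coords A B u))).

(* The fields above are the partial derivatives of z: in u because the
   coordinates are affine in (A, B), in v by the Frenet equations. *)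
Lemma surf_z_derivatives (l r : R) (A B : R -> R) (DA DB : nat -> R -> R) :
  smooth_on l r A DA -> smooth_on l r B DB ->
  forall u v, l < u < r ->
    has_pd_u (surf_z a b al be A B) (surf_zu DA DB) u v /\
    has_pd_v (surf_z a b al be A B) (surf_zv A B) u v /\
    has_pd_u (surf_zu DA DB) (surf_zuu DA DB) u v /\
    has_pd_v (surf_zu DA DB) (surf_zuv DA DB) u v /\
    has_pd_v (surf_zv A B) (surf_zvv A B) u v.
Proof.
  intros [HA0 HA] [HB0 HB] u v hu.
  assert (dA : derivable_pt_lim A u (DA 1%nat u)).
  { eapply derivable_pt_lim_ext; [intros; apply HA0 | apply HA; exact hu]. }
  assert (dB : derivable_pt_lim B u (DB 1%nat u)).
  { eapply derivable_pt_lim_ext; [intros; apply HB0 | apply HB; exact hu]. }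
  assert (coords_u : forall (f g : R -> R) (Df Dg : R),
    derivable_pt_lim f u Df -> derivable_pt_lim g u Dg ->
    has_vderiv (fun s => mkR4 0 (f s) 0 (g s)) u (mkR4 0 Df 0 Dg)).
  { intros; unfold has_vderiv; cbn [x1 x2 x3 x4];
    repeat split; try apply derivable_pt_lim_const; assumption. }
  unfold surf_zu, surf_zv, surf_zuu, surf_zuv, surf_zvv.
  split; [| split; [| split; [| split]]];
    [apply has_pd_u_vderiv | apply has_pd_v_vderiv | apply has_pd_u_vderiv
    | apply has_pd_v_vderiv | apply has_pd_v_vderiv].
  - eapply has_vderiv_ext; [intros; apply surf_in_frame |].
    apply has_vderiv_frame_comb; unfold surf_coords; apply coords_u.
    + replace (DA 1%nat u) with (DA 1%nat u + 0) by ring.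
      apply derivable_pt_lim_plus; [assumption | apply derivable_pt_lim_const].
    + replace (DB 1%nat u) with (DB 1%nat u + 0) by ring.
      apply derivable_pt_lim_plus; [assumption | apply derivable_pt_lim_const].
  - eapply has_vderiv_ext; [intros; apply surf_in_frame | apply frenet_equations].
  - apply has_vderiv_frame_comb, coords_u; auto.
  - apply frenet_equations.
  - apply frenet_equations.
Qed.

Lemma surface_lin_indep (Au Bu p q : R) (v : R) :
  0 < p ^ 2 + q ^ 2 -> 0 < (K * Au - 1) ^ 2 + (tau * Au - sig * Bu) ^ 2 ->
  lin_indep (frenet_frame v (mkR4 0 p 0 q))
            (frenet_frame v (mkR4 (1 - K * Au) 0 (tau * Au - sig * Bu) 0)).
Proof.
  intros hE hG; apply lin_indep_iso; [apply frenet_frame_isometry |].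
  apply lin_indep_coords; [exact hE |].
  replace ((1 - K * Au) ^ 2) with ((K * Au - 1) ^ 2) by ring; exact hG.
Qed.

Lemma surface_mean_curv_zero (Au Bu p q a1 a2 : R) (m : R4) (v : R) :
  0 < p ^ 2 + q ^ 2 -> 0 < (K * Au - 1) ^ 2 + (tau * Au - sig * Bu) ^ 2 ->
  let xv := mkR4 (1 - K * Au) 0 (tau * Au - sig * Bu) 0 in
  mean_curv (frenet_frame v (mkR4 0 p 0 q)) (frenet_frame v xv)
            (frenet_frame v (mkR4 0 a1 0 a2)) (frenet_frame v m)
            (frenet_frame v (frenet_deriv xv)) = vzero
  <->
  (a1 * q - p * a2) / (p ^ 2 + q ^ 2)
  = ((K * Au - 1) * K * q + (tau * Au - sig * Bu) * (sig * p + tau * q))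
    / ((K * Au - 1) ^ 2 + (tau * Au - sig * Bu) ^ 2).
Proof.
  intros hE hG; cbv zeta.
  rewrite mean_curv_iso, iso_eq_zero by apply frenet_frame_isometry.
  set (P := 1 - K * Au); set (Q := tau * Au - sig * Bu).
  assert (hG' : 0 < P ^ 2 + Q ^ 2)
    by (unfold P; replace ((1 - K * Au) ^ 2) with ((K * Au - 1) ^ 2) by ring; exact hG).
  replace (frenet_deriv (mkR4 P 0 Q 0)) with (mkR4 0 (K * P - tau * Q) 0 (sig * Q))
    by (apply R4_ext; unfold frenet_deriv; cbn; ring).
  rewrite mean_curv_coords_zero by assumption.
  replace ((K * Au - 1) ^ 2 + Q ^ 2) with (P ^ 2 + Q ^ 2) by (unfold P; ring).
  replace ((K * Au - 1) * K * q) with (- (K * P * q)) by (unfold P; ring).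
  assert (HW : (a1 * q - p * a2) / (p ^ 2 + q ^ 2)
                - (- (K * P * q) + Q * (sig * p + tau * q)) / (P ^ 2 + Q ^ 2)
              = - ((p * a2 - q * a1) / (p ^ 2 + q ^ 2)
                   + (p * (sig * Q) - q * (K * P - tau * Q)) / (P ^ 2 + Q ^ 2)))
    by (field; split; lra).
  lra.
Qed.

End FrenetFrame.

Theorem proposition7p6
  (a b al be : R) (Hal : 0 < al) (Hbe : 0 < be) (Hne : al <> be)
  (Hab : a ^ 2 * al ^ 2 + b ^ 2 * be ^ 2 = 1)
  (l r : R) (Hlr : l < r)
  (A B : R -> R) (DA DB : nat -> R -> R)
  (HA : smooth_on l r A DA) (HB : smooth_on l r B DB)
  (Hreg1 : forall u, l < u < r -> DA 1%nat u ^ 2 + DB 1%nat u ^ 2 > 0)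
  (Hreg2 : forall u, l < u < r ->
     (kap a b al be * A u - 1) ^ 2
     + (tau_c a b al be * A u - sig_c a b al be * B u) ^ 2 > 0) :
  minimal_on (surf_z a b al be A B) (fun u v => l < u < r)
  <->
  (forall u, l < u < r ->
     (DA 2%nat u * DB 1%nat u - DA 1%nat u * DB 2%nat u)
       / (DA 1%nat u ^ 2 + DB 1%nat u ^ 2)
     =
     ((kap a b al be * A u - 1) * kap a b al be * DB 1%nat u
      + (tau_c a b al be * A u - sig_c a b al be * B u)
        * (sig_c a b al be * DA 1%nat u + tau_c a b al be * DB 1%nat u))
     / ((kap a b al be * A u - 1) ^ 2
        + (tau_c a b al be * A u - sig_c a b al be * B u) ^ 2)).
Proof.
  rewrite (minimal_on_strip _ _ _ _ _ _ l r
             (surf_z_derivatives a b al be Hab l r A B DA DB HA HB)).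
  unfold surf_zu, surf_zv, surf_zuu, surf_zuv, surf_zvv.
  setoid_rewrite (frenet_deriv_surf_coords a b al be Hab A B).
  split.
  - intros Hmin u hu; destruct (Hmin u 0 hu) as [_ Hmean].
    exact (proj1 (surface_mean_curv_zero a b al be Hab _ _ _ _ _ _ _ _
                    (Hreg1 u hu) (Hreg2 u hu)) Hmean).
  - intros Hode u v hu; split.
    + exact (surface_lin_indep a b al be Hab _ _ _ _ _ (Hreg1 u hu) (Hreg2 u hu)).
    + exact (proj2 (surface_mean_curv_zero a b al be Hab _ _ _ _ _ _ _ _
                      (Hreg1 u hu) (Hreg2 u hu)) (Hode u hu)).
Qed.
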